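(* Let $p$ be a prime, $V$ a finite-dimensional $\mathbb{F}_p$-vector space, $K \subseteq \mathcal{A}(V)$ a symplectic subspace, and $\beta: V \times V \to K^*$ a bilinear map with $\omega_K(v,w) = \beta(v,w)-\beta(w,v)$ for all $v,w \in V$. Then the irreducible complex representations of the generalized Heisenberg group $H = H(V,K,\beta)$ are exactly the following, up to isomorphism: (i) $|V|$ one-dimensional representations, one for each character of $V$ (pulled back along $H \to V$, $(v,t)\mapsto v$); (ii) $|K|-1$ representations of dimension $\sqrt{|V|}$, one for each nontrivial character $\psi: K^* \to \mathbb{C}^\times$, namely the one on which the central subgroup $K^*=\{(0,t)\}$ acts by $\psi$.
   Context: For an $\mathbb{F}_p$-vector space $V$, $\mathcal{A}(V)$ is the space of alternating bilinear forms $V\times V \to \mathbb{F}_p$. A subspace $K\subseteq\mathcal{A}(V)$ is symplectic if every nonzero element of $K$ is non-degenerate. For a subspace $K$, $\omega_K: V \times V \to K^*$ is defined by $\omega_K(v,w)(k) = k(v,w)$ for $k\in K$. The group $H(V,K,\beta)$ has underlying set $V \times K^*$ with multiplication $(v,t)(v',t') = (v+v', t+t'+\beta(v,v'))$; when $K$ is symplectic it is called a generalized Heisenberg group. Characters of the $\mathbb{F}_p$-vector spaces are homomorphisms to $\mathbb{C}^\times$. *)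

From HB Require Import structures.
From mathcomp Require Import all_boot all_order all_algebra all_fingroup all_solvable all_field all_character.
Set Implicit Arguments. Unset Strict Implicit. Unset Printing Implicit Defensive.
Import GRing.Theory Num.Theory.
Local Open Scope ring_scope.

(* V = 'rV['F_p]_n (coordinates).  A bilinear form V x V -> F_p is given by
   its Gram matrix M : form M v w = v M w^T. *)
Definition form (p n : nat) (M : 'M['F_p]_n) (v w : 'rV['F_p]_n) : 'F_p :=
  (v *m M *m w^T) 0 0.

Definition alternating (p n : nat) (M : 'M['F_p]_n) : Prop :=
  forall v, form M v v = 0.

Definition nondegenerate (p n : nat) (M : 'M['F_p]_n) : Prop :=
  forall v, (forall w, form M v w = 0) -> v = 0.

(* K = span of the basis (A i)_{i<m}; an element of K is \sum_i c_i A_i.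
   K symplectic: every nonzero element of K is non-degenerate. *)
Definition symplectic (p n m : nat) (A : 'I_m -> 'M['F_p]_n) : Prop :=
  forall c : 'rV['F_p]_m, \sum_i c 0 i *: A i != 0 -> nondegenerate (\sum_i c 0 i *: A i).

(* K^* is identified with 'rV['F_p]_m via t |-> (t(A_i))_i (dual basis).
   omega_K(v,w) in K^* has coordinates (A_i(v,w))_i. *)
Definition omega (p n m : nat) (A : 'I_m -> 'M['F_p]_n) (v w : 'rV['F_p]_n)
  : 'rV['F_p]_m := \row_i form (A i) v w.

(* A bilinear map beta : V x V -> K^* = F_p^m, given by its m coordinate
   Gram matrices (every bilinear map is of this form). *)
Definition beta (p n m : nat) (B : 'I_m -> 'M['F_p]_n) (v w : 'rV['F_p]_n)
  : 'rV['F_p]_m := \row_i form (B i) v w.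

Lemma formDl p n (M : 'M['F_p]_n) u v w : form M (u + v) w = form M u w + form M v w.
Proof. by rewrite /form !mulmxDl mxE. Qed.
Lemma formDr p n (M : 'M['F_p]_n) u v w : form M u (v + w) = form M u v + form M u w.
Proof. by rewrite /form linearD /= mulmxDr mxE. Qed.
Lemma formNl p n (M : 'M['F_p]_n) u w : form M (- u) w = - form M u w.
Proof. by rewrite /form !mulNmx mxE. Qed.

Lemma betaDl p n m (B : 'I_m -> 'M['F_p]_n) u v w :
  beta B (u + v) w = beta B u w + beta B v w.
Proof. by apply/rowP => i; rewrite !mxE formDl. Qed.
Lemma betaDr p n m (B : 'I_m -> 'M['F_p]_n) u v w :
  beta B u (v + w) = beta B u v + beta B u w.
Proof. by apply/rowP => i; rewrite !mxE formDr. Qed.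
Lemma betaNl p n m (B : 'I_m -> 'M['F_p]_n) u w :
  beta B (- u) w = - beta B u w.
Proof. by apply/rowP => i; rewrite !mxE formNl. Qed.

Definition heis (p n m : nat) (B : 'I_m -> 'M['F_p]_n) : Type :=
  ('rV['F_p]_n * 'rV['F_p]_m)%type.

Section Heis.
Variables (p n m : nat) (B : 'I_m -> 'M['F_p]_n).
HB.instance Definition _ := Finite.on (heis B).

Definition heis_mul (x y : heis B) : heis B :=
  (x.1 + y.1, x.2 + y.2 + beta B x.1 y.1).
Definition heis_one : heis B := (0, 0).
Definition heis_inv (x : heis B) : heis B := (- x.1, - x.2 + beta B x.1 x.1).

Lemma heis_mulA : associative heis_mul.
Proof.
case=> a s [b t] [c u]; rewrite /heis_mul /=; congr (_, _); first by rewrite addrA.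
rewrite betaDl betaDr.
move: (beta B a b) (beta B a c) (beta B b c) => x1 y1 z1.
rewrite -!addrA; congr (_ + _); congr (_ + _).
rewrite [RHS]addrCA; congr (_ + _).
by rewrite addrC -addrA.
Qed.

Lemma heis_mul1 : left_id heis_one heis_mul.
Proof.
case=> a s; rewrite /heis_mul /heis_one /=; congr (_, _); first by rewrite add0r.
have -> : beta B 0 a = 0 by apply/rowP => i; rewrite !mxE /form !mul0mx mxE.
by rewrite add0r addr0.
Qed.

Lemma heis_mulV : left_inverse heis_one heis_inv heis_mul.
Proof.
case=> a s; rewrite /heis_mul /heis_inv /heis_one /=; congr (_, _); first by rewrite addNr.
by rewrite betaNl addrAC addrK addNr.
Qed.

HB.instance Definition _ := Finite_isGroup.Build (heis B) heis_mulA heis_mul1 heis_mulV.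

Definition hproj (h : heis B) : 'rV['F_p]_n := h.1.
Definition hcent (t : 'rV['F_p]_m) : heis B := (0, t).
End Heis.

Definition is_character (T : zmodType) (f : T -> algC) : Prop :=
  (forall x, f x != 0) /\ (forall x y, f (x + y) = f x * f y).

Definition nontrivial_char (T : zmodType) (f : T -> algC) : Prop :=
  exists x, f x != 1.

(* The centre K^* = {(0, t)} of H acts on an irreducible representation by
   scalars, through a character c of K^*.  If c is trivial, commutators act
   trivially, so H acts by commuting scalars and the representation is a
   character of V.  If c is nontrivial, symplecticity makes w |-> omega(w, v)
   onto K^* for v != 0, so (v, t) is conjugate to itself times a central
   element on which c is not 1: the character vanishes off the centre.  Its
   norm then forces d^2 = |V|, and two such representations with the same
   central character have the same character, hence are isomorphic.  Every
   psi occurs, because the regular character paired with psi on the centre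
   is |H| != 0. *)

From Pilot Require Import Defs.
From HB Require Import structures.
From mathcomp Require Import all_boot all_order all_algebra all_fingroup all_solvable all_field all_character.
From Stdlib Require Import FunctionalExtensionality.
Import GRing.Theory Num.Theory.
Local Open Scope ring_scope.

Set Implicit Arguments.
Unset Strict Implicit.
Unset Printing Implicit Defensive.

Section Characters.
Variable T : zmodType.
Implicit Types f : T -> algC.

Lemma character0 f : is_character f -> f 0 = 1.
Proof.
case=> nz fD; apply: (mulIf (nz 0)).
by rewrite mul1r -fD addr0.
Qed.

Lemma characterN f x : is_character f -> f x * f (- x) = 1.
Proof. by move=> hf; rewrite -(proj2 hf) subrr character0. Qed.

Lemma character_of_morph f :
  f 0 = 1 -> {morph f : x y / x + y >-> x * y} -> is_character f.
Proof.
move=> f0 fD; split=> // x; apply/eqP => fx0.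
by have /eqP := fD x (- x); rewrite subrr f0 fx0 mul0r oner_eq0.
Qed.

Lemma scalar_repr_character d (i0 : 'I_d) (r : T -> 'M[algC]_d) f :
  (forall x, r x = (f x)%:M) -> r 0 = 1%:M ->
  {morph r : x y / x + y >-> x *m y} -> is_character f.
Proof.
move=> rE r0 rD; have entry a : (a%:M : 'M[algC]_d) i0 i0 = a.
  by rewrite mxE eqxx mulr1n.
apply: character_of_morph => [|x y].
  by rewrite -(entry (f 0)) -rE r0 entry.
by rewrite -(entry (f (x + y))) -rE rD !rE -scalar_mxM entry.
Qed.

End Characters.

Lemma character_eq1_of_sum_neq0 (T : finZmodType) (f : T -> algC) :
  is_character f -> \sum_t f t != 0 -> forall s, f s = 1.
Proof.
move=> [_ fD] S0 s.
have shift : \sum_t f t = f s * \sum_t f t.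
  rewrite mulr_sumr (reindex_inj (addrI s)) /=.
  by apply: eq_bigr => t _; rewrite fD.
apply/eqP; rewrite -subr_eq0 -(mulIr_eq0 _ (mulIf S0)).
by rewrite mulrBl mul1r -shift subrr.
Qed.

Lemma is_scalar_mx_entry (R : nmodType) d (i : 'I_d) (M : 'M[R]_d) :
  is_scalar_mx M -> M = (M i i)%:M.
Proof. by case/is_scalar_mxP=> a ->; rewrite mxE eqxx mulr1n. Qed.

Section Representations.
Variables (gT : finGroupType) (G : {group gT}).

Lemma mx_irr_cent_scalar (F : closedFieldType) d (rG : mx_representation F G d) A :
  mx_irreducible rG -> centgmx rG A -> is_scalar_mx A.
Proof. by move/group_closure_closed_field/mx_abs_irr_cent_scalar; apply. Qed.

Lemma mx_irr_scalar_linear (F : fieldType) d (rG : mx_representation F G d) :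
  mx_irreducible rG -> (forall x, x \in G -> is_scalar_mx (rG x)) -> d = 1%N.
Proof.
move=> irrG scG; have d_gt0 : (0 < d)%N by case/mx_irrP: irrG.
pose i0 := Ordinal d_gt0; pose U : 'M[F]_d := delta_mx i0 i0.
have modU : mxmodule rG U.
  apply/mxmoduleP => x Gx; have /is_scalar_mxP[a ->] := scG x Gx.
  by rewrite mul_mx_scalar scalemx_sub.
have nzU : U != 0.
  by apply/eqP => /matrixP/(_ i0 i0)/eqP; rewrite !mxE !eqxx oner_eq0.
case/mx_irrP: irrG => _ /(_ U modU nzU) /eqP <-.
by rewrite mxrank_delta.
Qed.

Lemma mx_rsim_scalar_eq (F : fieldType) d1 d2 (r1 : mx_representation F G d1)
    (r2 : mx_representation F G d2) x a b :
  (0 < d2)%N -> mx_rsim r1 r2 -> x \in G -> r1 x = a%:M -> r2 x = b%:M -> a = b.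
Proof.
move=> d2_gt0 r12 Gx /(mx_rsim_scalar Gx r12) -> /matrixP/(_ (Ordinal d2_gt0) (Ordinal d2_gt0)).
by rewrite !mxE eqxx !mulr1n.
Qed.

Lemma mxtrace_conj_scalar (F : fieldType) d (rG : mx_representation F G d) x y z a :
  x \in G -> y \in G -> z \in G -> (x * y = y * x * z)%g ->
  rG z = a%:M -> a != 1 -> \tr (rG y) = 0.
Proof.
move=> Gx Gy Gz xy rz a1.
have : \tr (rG y) = a * \tr (rG y).
  rewrite -{1}(mulKg x y) xy !repr_mxM ?groupV ?groupM // rz.
  rewrite mul_mx_scalar -scalemxAr mxtraceZ mxtrace_mulC.
  by rewrite -mulmxA -repr_mxM ?groupV // mulgV repr_mx1 mulmx1.
move/eqP; rewrite -subr_eq0 -{1}[\tr _]mul1r -mulrBl mulf_eq0 subr_eq0 eq_sym.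
by rewrite (negbTE a1) => /eqP.
Qed.

End Representations.

Section HeisenbergGroup.
Variables (p n m : nat) (B : 'I_m -> 'M['F_p]_n).
Local Notation H := (heis B).

Lemma heis_mulE (x y : H) : (x * y)%g = (x.1 + y.1, x.2 + y.2 + beta B x.1 y.1).
Proof. by []. Qed.

Lemma beta0l v : beta B 0 v = 0.
Proof. by apply/rowP => i; rewrite !mxE /Defs.form !mul0mx mxE. Qed.

Lemma beta0r v : beta B v 0 = 0.
Proof. by apply/rowP => i; rewrite !mxE /Defs.form trmx0 mulmx0 mxE. Qed.

Lemma hcent0 : hcent B 0 = 1%g.
Proof. by []. Qed.

Lemma hcentM t s : (hcent B t * hcent B s)%g = hcent B (t + s).
Proof. by rewrite heis_mulE /hcent /= addr0 beta0l addr0. Qed.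

Lemma hcentV t : ((hcent B t)^-1)%g = hcent B (- t).
Proof. by apply: (mulgI (hcent B t)); rewrite mulgV hcentM subrr. Qed.

Lemma hcent_eq1 t : (hcent B t == 1%g) = (t == 0).
Proof. by apply/eqP/eqP => [/(congr1 snd) | ->]. Qed.

Lemma hcent_central t (x : H) : (hcent B t * x)%g = (x * hcent B t)%g.
Proof.
case: x => v s; rewrite !heis_mulE /hcent /= beta0l beta0r add0r !addr0.
by rewrite addrC.
Qed.

Lemma heis_decomp (x : H) : x = (((x.1, 0) : H) * hcent B x.2)%g.
Proof. by case: x => v t; rewrite heis_mulE /hcent /= beta0r !addr0 add0r. Qed.

Lemma heis_mul_horizontal v w :
  (((v, 0) : H) * (w, 0))%g = (((v + w, 0) : H) * hcent B (beta B v w))%g.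
Proof. by rewrite !heis_mulE /hcent /= beta0r !addr0 !add0r. Qed.

Lemma heis_commute (x y : H) :
  (x * y)%g = (y * x * hcent B (beta B x.1 y.1 - beta B y.1 x.1))%g.
Proof.
case: x y => [w s] [v t]; rewrite !heis_mulE /hcent /= beta0r !addr0.
rewrite (addrC v); congr (_, _).
by rewrite [beta B w v - _]addrC addrA addrK (addrC s).
Qed.

Lemma big_heis (F : H -> algC) :
  \sum_(x in [set: H]) F x = \sum_(v : 'rV['F_p]_n) \sum_(t : 'rV['F_p]_m) F (v, t).
Proof.
rewrite (eq_bigl xpredT) => [|x]; last by rewrite in_setT.
by rewrite pair_big; apply: eq_bigr => -[].
Qed.

End HeisenbergGroup.

Lemma form_sum p n m (c : 'I_m -> 'F_p) (M : 'I_m -> 'M['F_p]_n) v w :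
  Defs.form (\sum_i c i *: M i) v w = \sum_i c i * Defs.form (M i) v w.
Proof.
rewrite /Defs.form mulmx_sumr mulmx_suml summxE; apply: eq_bigr => i _.
by rewrite -scalemxAr -scalemxAl mxE.
Qed.

Lemma alternating_skew p n (M : 'M['F_p]_n) :
  alternating M -> forall v w, Defs.form M v w = - Defs.form M w v.
Proof.
move=> alt v w; have := alt (v + w).
rewrite Defs.formDl !Defs.formDr !alt add0r addr0 => /eqP.
by rewrite addr_eq0 => /eqP.
Qed.

Section Symplectic.
Variables (p n m : nat) (A : 'I_m -> 'M['F_p]_n).
Hypotheses (A_alt : forall i, alternating (A i))
  (A_free : forall c : 'rV['F_p]_m, \sum_i c 0 i *: A i = 0 -> c = 0)
  (K_symp : symplectic A).

(* The map w |-> omega(w, v) is w *m N; its transpose is injective because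
   c *m N^T = 0 says that v lies in the radical of the form \sum_i c_i A_i. *)
Lemma omega_surj v : v != 0 -> forall x, exists w, omega A w v = x.
Proof.
move=> nzv x.
pose N : 'M['F_p]_(n, m) := \matrix_(j, i) (A i *m v^T) j 0.
have omegaE w : omega A w v = w *m N.
  apply/rowP => i; rewrite !mxE /Defs.form -mulmxA mxE.
  by apply: eq_bigr => j _; rewrite !mxE.
have fullN : row_full N.
  rewrite /row_full -mxrank_tr -[_ == _]/(row_free _) -kermx_eq0.
  apply/eqP/row_matrixP => k; rewrite row0.
  set c := row k (kermx N^T).
  have cN : c *m N^T = 0 by rewrite /c -row_mul mulmx_ker row0.
  apply: A_free; apply/eqP; apply: contraT => /K_symp ndM.
  case/eqP: nzv; apply: ndM => w.
  rewrite alternating_skew => [|u]; last first.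
    by rewrite form_sum big1 // => i _; rewrite A_alt mulr0.
  have -> : Defs.form (\sum_i c 0 i *: A i) w v = ((w *m N) *m c^T) 0 0.
    by rewrite form_sum mxE; apply: eq_bigr => i _; rewrite -omegaE !mxE mulrC.
  by rewrite -mulmxA -[N]trmxK -trmx_mul cN trmx0 mulmx0 mxE oppr0.
have /submxP[w ->] : (x <= N)%MS by apply: submx_full.
by exists w; rewrite omegaE.
Qed.

End Symplectic.

Section HeisenbergRepresentations.
Variables (p n m : nat) (B : 'I_m -> 'M['F_p]_n).
Local Notation H := (heis B).
Local Notation G := [set: heis B]%G.
Variables (d : nat) (rho : mx_representation algC G d).
Hypothesis rho_irr : mx_irreducible rho.

Lemma heis_reprM (x y : H) : rho (x * y)%g = rho x *m rho y.
Proof. exact: repr_mxM (in_setT x) (in_setT y). Qed.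

Let d_gt0 : (0 < d)%N. Proof. by case/mx_irrP: rho_irr. Qed.
Let i0 := Ordinal d_gt0.

Lemma heis_center_character :
  exists c, is_character c /\ forall t, rho (hcent B t) = (c t)%:M.
Proof.
have rho_scalar t : rho (hcent B t) = (rho (hcent B t) i0 i0)%:M.
  apply/is_scalar_mx_entry/(mx_irr_cent_scalar rho_irr)/centgmxP => x _.
  by rewrite -!heis_reprM hcent_central.
exists (fun t => rho (hcent B t) i0 i0); split=> //.
apply: (@scalar_repr_character _ _ i0 (fun t => rho (hcent B t))) => // [|t s].
  by rewrite hcent0 repr_mx1.
by rewrite -heis_reprM hcentM.
Qed.

(* If the centre acts trivially then, since all commutators are central, the
   image of rho is commutative, hence scalar by Schur's lemma. *)
Lemma heis_linear_of_center1 : (forall t, rho (hcent B t) = 1%:M) ->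
  d = 1%N /\ exists lam : 'rV['F_p]_n -> algC,
    is_character lam /\ forall h, rho h = (lam (hproj h))%:M.
Proof.
move=> rho_c1.
have rho_scalar x : is_scalar_mx (rho x).
  apply/(mx_irr_cent_scalar rho_irr)/centgmxP => y _.
  by rewrite -!heis_reprM heis_commute heis_reprM rho_c1 mulmx1.
split; first exact: mx_irr_scalar_linear rho_irr (fun x _ => rho_scalar x).
have rho_horiz v : rho ((v, 0) : H) = (rho ((v, 0) : H) i0 i0)%:M.
  exact: is_scalar_mx_entry.
exists (fun v => rho ((v, 0) : H) i0 i0); split.
  apply: (@scalar_repr_character _ _ i0 (fun v => rho ((v, 0) : H))) => // [|v w].
    exact: repr_mx1.
  by rewrite -heis_reprM heis_mul_horizontal heis_reprM rho_c1 mulmx1.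
by move=> h; rewrite {1}(heis_decomp h) heis_reprM rho_c1 mulmx1; apply: rho_horiz.
Qed.

End HeisenbergRepresentations.

Section NontrivialCentralCharacter.
Variables (p n m : nat) (A B : 'I_m -> 'M['F_p]_n).
Hypotheses (A_alt : forall i, alternating (A i))
  (A_free : forall c : 'rV['F_p]_m, \sum_i c 0 i *: A i = 0 -> c = 0)
  (K_symp : symplectic A)
  (hB : forall v w, beta B v w - beta B w v = omega A v w).
Local Notation H := (heis B).
Local Notation G := [set: heis B]%G.
Variables (d : nat) (rho : mx_representation algC G d) (c : 'rV['F_p]_m -> algC).
Hypotheses (rho_c : forall t, rho (hcent B t) = (c t)%:M) (c_nontriv : nontrivial_char c).

(* Conjugating (v, t) by (w, 0) multiplies it by the central element
   omega(w, v), which can be chosen with c(omega(w, v)) != 1. *)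
Lemma heis_trace_off_center v t : v != 0 -> \tr (rho ((v, t) : H)) = 0.
Proof.
move=> nzv; case: c_nontriv => x cx.
have [w omega_wv] := omega_surj A_alt A_free K_symp nzv x.
apply: (@mxtrace_conj_scalar _ _ _ _ _ ((w, 0) : H) _ (hcent B x) (c x)) => //;
  rewrite ?in_setT //.
by rewrite heis_commute /= hB omega_wv.
Qed.

Lemma cfRepr_heis (x : H) : cfRepr rho x = if x.1 == 0 then c x.2 *+ d else 0.
Proof.
rewrite cfunE in_setT mulr1n; case: x => v t /=.
case: eqP => [-> | /eqP nzv]; last exact: heis_trace_off_center.
by rewrite -/(hcent B t) rho_c mxtrace_scalar.
Qed.

(* The character of rho vanishes off the centre K^*, so its norm is
   |K^*| d^2 / |H| = d^2 / |V|. *)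
Lemma heis_irr_degree_sq :
  mx_irreducible rho -> is_character c -> (d * d = #|{: 'rV['F_p]_n}|)%N.
Proof.
move=> rho_irr c_char.
have /irrWnorm : cfRepr rho \in irr G.
  by apply/irr_reprP; exists (Representation rho).
rewrite cfdotE big_heis (bigD1 0) //= [X in _ + X]big1 ?addr0 => [|v nzv]; last first.
  by apply: big1 => t _; rewrite cfRepr_heis /= (negbTE nzv) mul0r.
have -> : \sum_(t : 'rV['F_p]_m) cfRepr rho (0, t) * (cfRepr rho (0, t))^*
          = (#|{: 'rV['F_p]_m}| * (d * d))%:R.
  rewrite (eq_bigr (fun _ => (d * d)%:R)) => [|t _].
    by rewrite sumr_const -mulrnA mulnC.
  rewrite -char_inv ?cfRepr_char // -/(hcent B t) hcentV !cfRepr_heis /= eqxx.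
  by rewrite mulrnAl mulrnAr -mulrnA characterN.
move=> normE; have G0 : (#|G|%:R : algC) != 0 by rewrite pnatr_eq0 -lt0n cardG_gt0.
move: (canRL (mulVKf G0) normE); rewrite mulr1 cardsT card_prod => /eqP.
rewrite eqC_nat mulnC eqn_pmul2r ?cardG_gt0 //; first by move/eqP.
by rewrite -cardsT cardG_gt0.
Qed.

End NontrivialCentralCharacter.

Section Existence.
Variables (p n m : nat) (B : 'I_m -> 'M['F_p]_n).
Local Notation H := (heis B).
Local Notation G := [set: heis B]%G.
Variable psi : 'rV['F_p]_m -> algC.
Hypothesis psi_char : is_character psi.

(* Pair the regular character, restricted to K^*, with psi: the result is
   |H| != 0, so some irreducible constituent pairs nontrivially with psi. *)
Lemma exists_irr_center_pairing :
  exists i : Iirr G, \sum_t psi (- t) * 'chi_i (hcent B t) != 0.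
Proof.
pose S := \sum_(t : 'rV['F_p]_m) psi (- t) * cfReg G (hcent B t).
have S_card : S = #|G|%:R.
  rewrite /S (bigD1 0) //= big1 ?addr0 => [|t nzt].
    by rewrite oppr0 character0 // hcent0 cfRegE eqxx mul1r mulr1n.
  by rewrite cfRegE hcent_eq1 (negbTE nzt) mulr0n mulr0.
have S_irr : S = \sum_i 'chi[G]_i 1%g * \sum_t psi (- t) * 'chi_i (hcent B t).
  rewrite /S; under eq_bigr do rewrite cfReg_sum sum_cfunE mulr_sumr.
  rewrite exchange_big; apply: eq_bigr => i _; rewrite mulr_sumr.
  by apply: eq_bigr => t _; rewrite cfunE mulrCA.
apply/existsP; apply: contraT; rewrite negb_exists => /forallP all0.
have : #|G|%:R != 0 :> algC by rewrite pnatr_eq0 -lt0n cardG_gt0.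
by rewrite -S_card S_irr big1 ?eqxx // => i _; rewrite (eqP (negbNE (all0 i))) mulr0.
Qed.

Lemma exists_irr_center_character :
  exists d (rho : mx_representation algC G d),
    mx_irreducible rho /\ forall t, rho (hcent B t) = (psi t)%:M.
Proof.
have [i pairing_i] := exists_irr_center_pairing.
have /irr_reprP[[d rho] rho_irr chiE] := mem_irr i.
have [c [c_char rho_c]] := heis_center_character rho_irr.
exists d, rho; split=> // t.
have pairing_c : \sum_t psi (- t) * c t != 0.
  apply: contraNneq pairing_i => sum0.
  under eq_bigr do rewrite chiE cfunE in_setT mulr1n /= rho_c mxtrace_scalar mulrnAr.
  by rewrite sumrMnl sum0 mul0rn.
have ratio_char : is_character (fun t => psi (- t) * c t).
  case: psi_char => psi_nz psiD; case: c_char => c_nz cD; split.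
    by move=> x; rewrite mulf_neq0.
  by move=> x y; rewrite opprD psiD cD mulrACA.
have ratio1 := character_eq1_of_sum_neq0 ratio_char pairing_c t.
by rewrite rho_c -[c t]mul1r -(characterN t psi_char) -mulrA ratio1 mulr1.
Qed.

End Existence.

Lemma heis_linear_repr p n m (B : 'I_m -> 'M['F_p]_n) (lam : 'rV['F_p]_n -> algC) :
  is_character lam -> exists rho : mx_representation algC [set: heis B]%G 1,
    mx_irreducible rho /\ forall h, rho h = (lam (hproj h))%:M.
Proof.
move=> lam_char.
have lam_repr : mx_repr [set: heis B]%G (fun h : heis B => (lam h.1)%:M : 'M[algC]_1).
  split=> [|x y _ _]; first by rewrite /= character0.
  by rewrite /= (proj2 lam_char) scalar_mxM.
exists (MxRepresentation lam_repr); split=> //.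
exact/mx_abs_irrW/linear_mx_abs_irr.
Qed.

Section Uniqueness.
Variables (p n m : nat) (A B : 'I_m -> 'M['F_p]_n).
Hypotheses (A_alt : forall i, alternating (A i))
  (A_free : forall c : 'rV['F_p]_m, \sum_i c 0 i *: A i = 0 -> c = 0)
  (K_symp : symplectic A)
  (hB : forall v w, beta B v w - beta B w v = omega A v w).
Local Notation G := [set: heis B]%G.

Lemma heis_irr_rsim d1 d2 (rho1 : mx_representation algC G d1)
    (rho2 : mx_representation algC G d2) (c : 'rV['F_p]_m -> algC) :
  is_character c -> nontrivial_char c ->
  mx_irreducible rho1 -> mx_irreducible rho2 ->
  (forall t, rho1 (hcent B t) = (c t)%:M) -> (forall t, rho2 (hcent B t) = (c t)%:M) ->
  mx_rsim rho1 rho2.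
Proof.
move=> c_char c_nontriv irr1 irr2 rho1_c rho2_c.
have d12 : d1 = d2.
  apply/eqP; rewrite -eqn_sqr !expnS !expn0 !muln1.
  rewrite (heis_irr_degree_sq A_alt A_free K_symp hB rho1_c c_nontriv) //.
  by rewrite (heis_irr_degree_sq A_alt A_free K_symp hB rho2_c c_nontriv).
move: rho1 irr1 rho1_c; rewrite d12 => rho1 _ rho1_c.
apply/cfRepr_rsimP/eqP/cfunP => x.
by rewrite (cfRepr_heis A_alt A_free K_symp hB rho1_c) ?(cfRepr_heis A_alt A_free K_symp hB rho2_c).
Qed.

End Uniqueness.

Unset Implicit Arguments.

Theorem proposition2p10 (p : nat) (p_pr : prime p) (n m : nat)
  (A B : 'I_m -> 'M['F_p]_n)
  (A_alt : forall i, alternating (A i))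
  (A_free : forall c : 'rV['F_p]_m, \sum_i c 0 i *: A i = 0 -> c = 0)
  (K_symp : symplectic A)
  (hB : forall v w, beta B v w - beta B w v = omega A v w) :
  (forall lam : 'rV['F_p]_n -> algC, is_character lam ->
     exists rho : mx_representation algC [set: heis B]%G 1,
       mx_irreducible rho /\ forall h, rho h = (lam (hproj h))%:M)
  /\ (forall (lam1 lam2 : 'rV['F_p]_n -> algC)
        (rho1 rho2 : mx_representation algC [set: heis B]%G 1),
        is_character lam1 -> is_character lam2 ->
        (forall h, rho1 h = (lam1 (hproj h))%:M) ->
        (forall h, rho2 h = (lam2 (hproj h))%:M) ->
        mx_rsim rho1 rho2 -> lam1 = lam2)
  /\ (forall psi : 'rV['F_p]_m -> algC, is_character psi -> nontrivial_char psi ->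
        exists d (rho : mx_representation algC [set: heis B]%G d),
          [/\ (d * d = #|{: 'rV['F_p]_n}|)%N, mx_irreducible rho,
              (forall t, rho (hcent B t) = (psi t)%:M) &
              forall d' (rho' : mx_representation algC [set: heis B]%G d'),
                mx_irreducible rho' -> (forall t, rho' (hcent B t) = (psi t)%:M) ->
                mx_rsim rho rho'])
  /\ (forall (psi1 psi2 : 'rV['F_p]_m -> algC) d1 d2
        (rho1 : mx_representation algC [set: heis B]%G d1)
        (rho2 : mx_representation algC [set: heis B]%G d2),
        is_character psi1 -> is_character psi2 ->
        nontrivial_char psi1 -> nontrivial_char psi2 ->
        (forall t, rho1 (hcent B t) = (psi1 t)%:M) ->
        (forall t, rho2 (hcent B t) = (psi2 t)%:M) ->
        mx_irreducible rho1 -> mx_irreducible rho2 ->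
        mx_rsim rho1 rho2 -> psi1 = psi2)
  /\ (forall d (rho : mx_representation algC [set: heis B]%G d), mx_irreducible rho ->
        (d = 1%N /\ exists lam : 'rV['F_p]_n -> algC,
                     is_character lam /\ forall h, rho h = (lam (hproj h))%:M)
        \/ (exists psi : 'rV['F_p]_m -> algC, is_character psi /\ nontrivial_char psi /\
              forall t, rho (hcent B t) = (psi t)%:M)).
Proof.
split; first exact: heis_linear_repr.
split.
  move=> lam1 lam2 rho1 rho2 _ _ rho1_lam rho2_lam r12.
  apply: functional_extensionality => v.
  exact: mx_rsim_scalar_eq r12 (in_setT ((v, 0) : heis B)) (rho1_lam _) (rho2_lam _).
split.
  move=> psi psi_char psi_nontriv.
  have [d [rho [rho_irr rho_psi]]] := exists_irr_center_character B psi_char.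
  exists d, rho; split=> //.
    exact: (heis_irr_degree_sq A_alt A_free K_symp hB rho_psi psi_nontriv rho_irr psi_char).
  move=> d' rho' rho'_irr rho'_psi.
  exact: (heis_irr_rsim A_alt A_free K_symp hB psi_char psi_nontriv rho_irr rho'_irr rho_psi rho'_psi).
split.
  move=> psi1 psi2 d1 d2 rho1 rho2 _ _ _ _ rho1_psi rho2_psi _ rho2_irr r12.
  apply: functional_extensionality => t; have d2_gt0 : (0 < d2)%N by case/mx_irrP: rho2_irr.
  exact: mx_rsim_scalar_eq d2_gt0 r12 (in_setT _) (rho1_psi t) (rho2_psi t).
move=> d rho rho_irr.
have [c [c_char rho_c]] := heis_center_character rho_irr.
have [/existsP c_nontriv | /existsPn c_triv] := boolP [exists x, c x != 1].
  by right; exists c.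
left; apply: heis_linear_of_center1 rho_irr _ => t.
by rewrite rho_c (eqP (negbNE (c_triv t))).
Qed.
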